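(* Let $a\ge2$, $d\ge1$ and $s$ be integers with $\gcd(a,d)=1$ and $1\le s<a$, and write $c=\lceil (a-1)/s\rceil$. Let $\mathit{NR}$ be the set of positive integers not representable as $\sum_{i=0}^s(a+id)x_i$ with $x_0,\dots,x_s$ nonnegative integers, and let $S_m=\sum_{n\in\mathit{NR}}n^m$. Then \[ 2S_0=-sc^2+(2a-2+s)c+(a-1)(d-1), \] \[ 12S_1=-2s(2a+ds)c^3+\bigl(6a^2+3(2a+ds)(s-1)\bigr)c^2+\bigl(6(d-1)a(a-1)+(3d-2a-ds)s\bigr)c+(a-1)(d-1)(2ad-a-d-1), \] \[ \begin{aligned} 12S_2={}&-s\bigl((a+sd)(2a+sd)+a^2\bigr)c^4+\bigl(4a^3+2(3s-2)a^2+2sd(3s-2)a+2s^2d^2(s-1)\bigr)c^3\\ &+\bigl(6(d-1)a^3+3(2-s-2d)a^2-3sd(s-2)a-sd^2(s^2-3s+1)\bigr)c^2\\ &+\bigl(2(2d-1)(d-1)a^3-(6d^2-6d+2)a^2+2d(d-s)a+s(1-s)d^2\bigr)c+ad(a-1)(d-1)(ad-a-d). \end{aligned} \]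
   Context: $\lceil x\rceil$ is the least integer not less than $x$. *)

From HB Require Import structures.
From mathcomp Require Import all_boot all_order all_algebra.
Set Implicit Arguments. Unset Strict Implicit. Unset Printing Implicit Defensive.
Import Order.TTheory GRing.Theory Num.Theory.

Definition representable (a d s n : nat) : Prop :=
  exists x : 'I_s.+1 -> nat, n = (\sum_(i < s.+1) (a + i * d) * x i)%N.

Definition NR (a d s n : nat) : Prop := (0 < n)%N /\ ~ representable a d s n.

(* S_m computed over a (duplicate-free) enumeration l of NR, as an integer *)
Definition powsum (l : seq nat) (m : nat) : int :=
  (\sum_(n <- l) (n%:Z) ^+ m)%R.

Definition ceil_c (a s : nat) : int := Num.ceil ((a.-1)%:R / (s%:R) : rat).

From HB Require Import structures.
From mathcomp Require Import all_boot all_order all_algebra.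
From mathcomp Require Import ring lra zify.
Import Order.TTheory GRing.Theory Num.Theory.

(* Collecting the coefficients, n = sum_i (a + i d) x_i exactly when n = k a + j d with
   j <= k s (k = sum_i x_i, j = sum_i i x_i).  As gcd(a, d) = 1, the numbers t d with
   0 <= t < a meet every residue class modulo a once, and the least representable number
   congruent to t d is ceil(t/s) a + t d: the gaps of that class form a finite arithmetic
   progression of difference a below it.  Summing n^m over such a progression telescopes
   through a discrete primitive of x^m with step a, which reduces S_m to a sum over t < a
   of a polynomial in t and ceil(t/s).  That sum is evaluated by induction on the number
   of terms: its closed form, a polynomial in N and C = ceil((N-1)/s), is unchanged when
   C jumps by one at N = C s + 1. *)

Lemma representable0 a d s : representable a d s 0.
Proof. by exists (fun=> 0%N); rewrite big1 // => i _; rewrite muln0. Qed.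

Lemma representableD a d s m n :
  representable a d s m -> representable a d s n -> representable a d s (m + n).
Proof.
move=> [x ->] [y ->]; exists (fun i => x i + y i)%N.
by rewrite -big_split; apply: eq_bigr => i _; rewrite mulnDr.
Qed.

Lemma representable_gen a d s (i : 'I_s.+1) : representable a d s (a + i * d).
Proof.
exists (fun j => nat_of_bool (j == i)); rewrite (bigD1 i) //= eqxx muln1.
by rewrite big1 ?addn0 // => j /negbTE ->; rewrite muln0.
Qed.

Lemma representableP a d s n :
  representable a d s n <-> exists k j, j <= k * s /\ n = k * a + j * d.
Proof.
split=> [[x ->]|[k [j [le_js ->]]]].
  exists (\sum_(i < s.+1) x i), (\sum_(i < s.+1) i * x i); split.
    rewrite big_distrl /=; apply: leq_sum => i _.
    by rewrite mulnC leq_mul2l -ltnS ltn_ord orbT.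
  rewrite !big_distrl -big_split /=; apply: eq_bigr => i _.
  by rewrite mulnDl mulnC mulnAC.
elim: k j le_js => [|k IHk] j le_js.
  by move: le_js; rewrite mul0n leqn0 => /eqP ->; apply: representable0.
have le_is : minn j s < s.+1 by rewrite ltnS geq_minr.
have -> : k.+1 * a + j * d = (k * a + (j - minn j s) * d) + (a + minn j s * d).
  by rewrite mulSn mulnBl; have := leq_mul2r d (minn j s) j; rewrite geq_minl orbT; lia.
apply: representableD (representable_gen _ _ _ (Ordinal le_is)).
by apply: IHk; move: le_js; rewrite mulSn; lia.
Qed.

Definition ceildiv (s t : nat) : nat := (t + s.-1) %/ s.

Lemma leq_ceildivLR s t k : 0 < s -> (ceildiv s t <= k) = (t <= k * s).
Proof. by move=> s_gt0; rewrite -ltnS ltn_divLR // mulSn; lia. Qed.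

Lemma ceildiv_ge s t : 0 < s -> t <= ceildiv s t * s.
Proof. by move=> s_gt0; rewrite -leq_ceildivLR. Qed.

Lemma ceildiv_lt s t : 0 < s -> ceildiv s t * s < t + s.
Proof. by move=> s_gt0; have := leq_divM (t + s.-1) s; rewrite /ceildiv; lia. Qed.

Lemma ceildiv0 s : 0 < s -> ceildiv s 0 = 0.
Proof. by move=> s_gt0; apply/eqP; rewrite -leqn0 leq_ceildivLR. Qed.

Lemma ceildiv_pred s t : 0 < s ->
  ceildiv s t = ceildiv s t.-1 \/
  t = (ceildiv s t.-1 * s).+1 /\ ceildiv s t = (ceildiv s t.-1).+1.
Proof.
move=> s_gt0; have ge_t := ceildiv_ge s t s_gt0.
have ge_pred := ceildiv_ge s t.-1 s_gt0.
have lt_pred := ceildiv_lt s t.-1 s_gt0.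
have le_succ : ceildiv s t <= (ceildiv s t.-1).+1 by rewrite leq_ceildivLR // mulSn; lia.
case: (leqP (ceildiv s t) (ceildiv s t.-1)) => [|gt_pred].
  rewrite leq_ceildivLR // => le_t; left; apply/eqP.
  by rewrite eqn_leq leq_ceildivLR // le_t /= leq_ceildivLR //; lia.
have := gt_pred; rewrite ltnNge leq_ceildivLR // => not_le_t.
by right; lia.
Qed.

Lemma eqn_modM2r_coprime a d m n :
  coprime a d -> (m * d == n * d %[mod a]) = (m == n %[mod a]).
Proof.
move=> co_ad; wlog le_nm : m n / n <= m => [wlog_mn|].
  case/orP: (leq_total n m); first exact: wlog_mn.
  by rewrite eq_sym [in RHS]eq_sym; apply: wlog_mn.
by rewrite !eqn_mod_dvd ?leq_mul2r ?le_nm ?orbT // -mulnBl Gauss_dvdl.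
Qed.

Definition residue (a d t : nat) : nat := (t * d) %% a.

Definition least_rep (a d s t : nat) : nat := ceildiv s t * a + t * d.

Definition gaps (a d s : nat) : seq nat :=
  [seq residue a d t + j * a | t <- iota 0 a, j <- iota 0 (least_rep a d s t %/ a)].

Section Gaps.

Variables a d s : nat.
Hypotheses (a_gt0 : 0 < a) (s_gt0 : 0 < s) (co_ad : coprime a d).

Lemma residue_inj t t' : t < a -> t' < a -> residue a d t = residue a d t' -> t = t'.
Proof.
move=> lt_ta lt_t'a /eqP; rewrite eqn_modM2r_coprime //.
by rewrite !modn_small // => /eqP.
Qed.

Lemma perm_residue : perm_eq (map (residue a d) (iota 0 a)) (iota 0 a).
Proof.
have uniq_res : uniq (map (residue a d) (iota 0 a)).
  by rewrite map_inj_in_uniq ?iota_uniq // => t t'; rewrite !mem_iota; apply: residue_inj.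
have sub_res : {subset map (residue a d) (iota 0 a) <= iota 0 a}.
  by move=> _ /mapP[t _ ->]; rewrite mem_iota ltn_pmod.
have [_ eq_res] := uniq_min_size uniq_res sub_res (eq_leq (esym (size_map _ _))).
by apply: uniq_perm; rewrite ?iota_uniq.
Qed.

Lemma representable_least n t : t < a -> n %% a = residue a d t ->
  representable a d s n <-> least_rep a d s t <= n.
Proof.
move=> lt_ta n_mod; rewrite representableP; split=> [[k [j [le_js eq_n]]]|le_Ln].
  move: n_mod; rewrite eq_n modnMDl => /eqP.
  rewrite eqn_modM2r_coprime // (modn_small lt_ta) => /eqP j_mod.
  have le_ck : ceildiv s t <= k by rewrite leq_ceildivLR //; move: (leq_mod j a); lia.
  have -> : j * d = (j %/ a * d) * a + t * d.
    by rewrite {1}(divn_eq j a) j_mod mulnDl mulnAC.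
  rewrite /least_rep addnA leq_add2r.
  exact: leq_trans (leq_mul le_ck (leqnn a)) (leq_addr _ _).
have /dvdnP [q eq_q] : a %| n - least_rep a d s t.
  by rewrite -eqn_mod_dvd // n_mod /least_rep modnMDl.
exists (ceildiv s t + q), t; split.
  by rewrite mulnDl; move: (ceildiv_ge s t s_gt0); lia.
by move: eq_q le_Ln; rewrite /least_rep; lia.
Qed.

Lemma residue_addM_mod t j : (residue a d t + j * a) %% a = residue a d t.
Proof. by rewrite addnC modnMDl modn_mod. Qed.

Lemma uniq_gaps : uniq (gaps a d s).
Proof.
apply: allpairs_uniq_dep => [|t _|]; rewrite ?iota_uniq //.
move=> _ _ /allpairsPdep[t [j [t_in _ ->]]] /allpairsPdep[t' [j' [t'_in _ ->]]] /= eq_tj.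
have eq_t : t = t'.
  move: t_in t'_in; rewrite !mem_iota /= !add0n => lt_ta lt_t'a.
  by apply: residue_inj => //; rewrite -(residue_addM_mod t j) eq_tj residue_addM_mod.
by move: eq_tj; rewrite eq_t => /addnI /eqP; rewrite eqn_pmul2r // => /eqP ->.
Qed.

Lemma mem_gaps n : n \in gaps a d s <-> ~ representable a d s n.
Proof.
have least_mod t : least_rep a d s t %% a = residue a d t by rewrite /least_rep modnMDl.
split=> [/allpairsPdep[t [j [t_in j_in ->]]]|not_rep].
  move: t_in j_in; rewrite !mem_iota /= !add0n => lt_ta lt_jW.
  rewrite (representable_least _ _ lt_ta) ?residue_addM_mod //.
  rewrite {1}(divn_eq (least_rep a d s t) a) least_mod.
  by rewrite -(ltn_pmul2r a_gt0) in lt_jW; lia.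
have [t lt_ta res_t] : exists2 t, t < a & residue a d t = n %% a.
  have : n %% a \in map (residue a d) (iota 0 a).
    by rewrite (perm_mem perm_residue) mem_iota ltn_pmod.
  by case/mapP => t; rewrite mem_iota => lt_ta ->; exists t.
have lt_nL : n < least_rep a d s t.
  by rewrite ltnNge; apply/negP; rewrite -(representable_least _ _ lt_ta).
apply/allpairsPdep; exists t, (n %/ a); rewrite !mem_iota /= add0n.
split=> //; last by rewrite res_t addnC -divn_eq.
rewrite -(ltn_pmul2r a_gt0); move: lt_nL.
by rewrite {1}(divn_eq n a) {1}(divn_eq (least_rep a d s t) a) least_mod res_t; lia.
Qed.

Lemma NR_gaps n : n \in gaps a d s <-> NR a d s n.
Proof.
rewrite mem_gaps /NR; split=> [not_rep|[] //]; split=> //.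
by rewrite lt0n; apply: contra_notN not_rep => /eqP ->; apply: representable0.
Qed.

End Gaps.

Local Open Scope ring_scope.

Lemma ceil_ceildiv (R : archiRealFieldType) s t :
  (0 < s)%N -> Num.ceil (t%:R / s%:R : R) = (ceildiv s t)%:Z.
Proof.
move=> s_gt0; apply: ceil_def.
have ge_t : t%:R <= (ceildiv s t)%:R * s%:R :> R by rewrite -natrM ler_nat ceildiv_ge.
have lt_t : (ceildiv s t)%:R * s%:R < t%:R + s%:R :> R.
  by rewrite -natrM -natrD ltr_nat ceildiv_lt.
have s_pos : 0 < s%:R :> R by rewrite ltr0n.
rewrite rmorphB /= rmorph1 pmulrn ltr_pdivlMr // ler_pdivrMr //.
by apply/andP; split; nra.
Qed.

Lemma sum_iota_telescope (F u : int -> int) n :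
  (forall x, F (x + 1) - F x = u x) -> \sum_(k <- iota 0 n) u k%:Z = F n%:Z - F 0.
Proof.
move=> dF; have := @telescope_sumr_eq _ 0 n (fun k => F k%:Z) (fun k => u k%:Z).
by rewrite /index_iota subn0; apply=> // k _; rewrite -dF -addn1 PoszD.
Qed.

Lemma sum_ceildiv_telescope s (g P : int -> int -> int) N : (0 < s)%N ->
  P 0 0 = 0 ->
  (forall n c, P (n + 1) c - P n c = g c n) ->
  (forall c, P (c * s%:Z + 1) (c + 1) = P (c * s%:Z + 1) c) ->
  \sum_(t <- iota 0 N) g (ceildiv s t)%:Z t%:Z = P N%:Z (ceildiv s N.-1)%:Z.
Proof.
move=> s_gt0 P00 dP P_jump; elim: N => [|N IHN]; first by rewrite big_nil ceildiv0 //=.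
rewrite -[N.+1]addn1 iotaD big_cat big_seq1 add0n /= IHN PoszD addn1 /=.
case: (ceildiv_pred s N s_gt0) => [-> | [eq_N ->]]; first by rewrite -dP subrKC.
set c := ceildiv s N.-1.
have -> : N%:Z = c%:Z * s%:Z + 1 by rewrite eq_N -addn1 PoszD PoszM.
by rewrite -dP -addn1 PoszD P_jump subrKC.
Qed.

(* Discrete primitives of x and x^2 with step A:
   prim1 A (x + A) - prim1 A x = 2 A x  and  prim2 A (x + A) - prim2 A x = 6 A x^2. *)
Definition prim1 (A x : int) : int := x ^+ 2 - A * x.
Definition prim2 (A x : int) : int := 2 * x ^+ 3 - 3 * A * x ^+ 2 + A ^+ 2 * x.

(* k * sum_(t < N) Q (ceil(t/s) A + t D) with C = ceil((N-1)/s), for (k, Q) = (2, id),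
   (6, prim1 A) and (2, prim2 A) respectively. *)
Definition least_rep_sum0 (N C S A D : int) : int :=
  N ^+ 2 * D + 2 * N * C * A - N * D - C ^+ 2 * S * A + C * S * A - 2 * C * A.
Definition least_rep_sum1 (N C S A D : int) : int :=
  2 * N ^+ 3 * D ^+ 2 + 6 * N ^+ 2 * C * A * D - 3 * N ^+ 2 * A * D
  - 3 * N ^+ 2 * D ^+ 2 + 6 * N * C ^+ 2 * A ^+ 2 - 6 * N * C * A ^+ 2
  - 6 * N * C * A * D + 3 * N * A * D + N * D ^+ 2 - 2 * C ^+ 3 * S ^+ 2 * A * D
  - 4 * C ^+ 3 * S * A ^+ 2 + 3 * C ^+ 2 * S ^+ 2 * A * D + 6 * C ^+ 2 * S * A ^+ 2
  - 3 * C ^+ 2 * S * A * D - 6 * C ^+ 2 * A ^+ 2 - C * S ^+ 2 * A * D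
  - 2 * C * S * A ^+ 2 + 3 * C * S * A * D + 6 * C * A ^+ 2.
Definition least_rep_sum2 (N C S A D : int) : int :=
  N ^+ 4 * D ^+ 3 + 4 * N ^+ 3 * C * A * D ^+ 2 - 2 * N ^+ 3 * A * D ^+ 2
  - 2 * N ^+ 3 * D ^+ 3 + 6 * N ^+ 2 * C ^+ 2 * A ^+ 2 * D
  - 6 * N ^+ 2 * C * A ^+ 2 * D - 6 * N ^+ 2 * C * A * D ^+ 2 + N ^+ 2 * A ^+ 2 * D
  + 3 * N ^+ 2 * A * D ^+ 2 + N ^+ 2 * D ^+ 3 + 4 * N * C ^+ 3 * A ^+ 3
  - 6 * N * C ^+ 2 * A ^+ 3 - 6 * N * C ^+ 2 * A ^+ 2 * D + 2 * N * C * A ^+ 3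
  + 6 * N * C * A ^+ 2 * D + 2 * N * C * A * D ^+ 2 - N * A ^+ 2 * D
  - N * A * D ^+ 2 - C ^+ 4 * S ^+ 3 * A * D ^+ 2 - 3 * C ^+ 4 * S ^+ 2 * A ^+ 2 * D
  - 3 * C ^+ 4 * S * A ^+ 3 + 2 * C ^+ 3 * S ^+ 3 * A * D ^+ 2
  + 6 * C ^+ 3 * S ^+ 2 * A ^+ 2 * D - 2 * C ^+ 3 * S ^+ 2 * A * D ^+ 2
  + 6 * C ^+ 3 * S * A ^+ 3 - 4 * C ^+ 3 * S * A ^+ 2 * D - 4 * C ^+ 3 * A ^+ 3
  - C ^+ 2 * S ^+ 3 * A * D ^+ 2 - 3 * C ^+ 2 * S ^+ 2 * A ^+ 2 * D
  + 3 * C ^+ 2 * S ^+ 2 * A * D ^+ 2 - 3 * C ^+ 2 * S * A ^+ 3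
  + 6 * C ^+ 2 * S * A ^+ 2 * D - C ^+ 2 * S * A * D ^+ 2 + 6 * C ^+ 2 * A ^+ 3
  - C * S ^+ 2 * A * D ^+ 2 - 2 * C * S * A ^+ 2 * D + C * S * A * D ^+ 2
  - 2 * C * A ^+ 3.

Section PowerSums.

Variables a d s : nat.
Hypotheses (a_gt0 : (0 < a)%N) (s_gt0 : (0 < s)%N) (co_ad : coprime a d).

Lemma powsum_gaps (Q : int -> int) (k : int) m :
  (forall x, Q (x + a%:Z) - Q x = k * a%:Z * x ^+ m) ->
  k * a%:Z * powsum (gaps a d s) m =
  \sum_(t <- iota 0 a) Q (least_rep a d s t)%:Z - \sum_(x <- iota 0 a) Q x%:Z.
Proof.
move=> dQ.
have -> : \sum_(x <- iota 0 a) Q x%:Z = \sum_(t <- iota 0 a) Q (residue a d t)%:Z.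
  by rewrite -(perm_big _ (perm_residue _ _ a_gt0 co_ad)) big_map.
rewrite /powsum big_allpairs_dep mulr_sumr -sumrB; apply: eq_bigr => t _.
set r := residue a d t; set W := (least_rep a d s t %/ a)%N.
have -> : (least_rep a d s t)%:Z = r%:Z + W%:Z * a%:Z.
  by rewrite -PoszM -PoszD addnC {1}(divn_eq (least_rep a d s t) a) /least_rep modnMDl.
under eq_bigr do rewrite PoszD PoszM.
rewrite mulr_sumr (sum_iota_telescope (fun x => Q (r%:Z + x * a%:Z))
  (fun x => k * a%:Z * (r%:Z + x * a%:Z) ^+ m)) ?mul0r ?addr0 // => x.
by rewrite mulrDl mul1r addrA dQ.
Qed.

Lemma powsum_gaps_closed m (Q R : int -> int) (P : int -> int -> int) (k k' : int) :
  (forall x, Q (x + a%:Z) - Q x = k * a%:Z * x ^+ m) ->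
  R 0 = 0 -> (forall x, R (x + 1) - R x = k' * Q x) ->
  P 0 0 = 0 -> (forall n c, P (n + 1) c - P n c = k' * Q (c * a%:Z + n * d%:Z)) ->
  (forall c, P (c * s%:Z + 1) (c + 1) = P (c * s%:Z + 1) c) ->
  k' * (k * a%:Z * powsum (gaps a d s) m) = P a%:Z (ceildiv s a.-1)%:Z - R a%:Z.
Proof.
move=> dQ R0 dR P00 dP P_jump.
rewrite (powsum_gaps _ _ _ dQ) mulrBr !mulr_sumr.
rewrite (sum_iota_telescope R (fun x => k' * Q x)) // R0 subr0.
under eq_bigr do rewrite /least_rep PoszD !PoszM.
by rewrite (sum_ceildiv_telescope s (fun c n => k' * Q (c * a%:Z + n * d%:Z)) P).
Qed.

Lemma powsum0_gaps : a%:Z * (2 * powsum (gaps a d s) 0) =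
  least_rep_sum0 a%:Z (ceildiv s a.-1)%:Z s%:Z a%:Z d%:Z - a%:Z * (a%:Z - 1).
Proof.
transitivity (2 * (1 * a%:Z * powsum (gaps a d s) 0)); first ring.
apply: (powsum_gaps_closed 0 id (fun x => x * (x - 1))
  (fun n c => least_rep_sum0 n c s%:Z a%:Z d%:Z));
  by move=> *; rewrite /id /least_rep_sum0; ring.
Qed.

Lemma powsum1_gaps : a%:Z * (12 * powsum (gaps a d s) 1) =
  least_rep_sum1 a%:Z (ceildiv s a.-1)%:Z s%:Z a%:Z d%:Z
  - ((a%:Z - 1) * a%:Z * (2 * a%:Z - 1) - 3 * a%:Z * a%:Z * (a%:Z - 1)).
Proof.
transitivity (6 * (2 * a%:Z * powsum (gaps a d s) 1)); first ring.
apply: (powsum_gaps_closed 1 (prim1 a%:Z)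
  (fun x => (x - 1) * x * (2 * x - 1) - 3 * a%:Z * x * (x - 1))
  (fun n c => least_rep_sum1 n c s%:Z a%:Z d%:Z));
  by move=> *; rewrite /prim1 /least_rep_sum1; ring.
Qed.

Lemma powsum2_gaps : a%:Z * (12 * powsum (gaps a d s) 2) =
  least_rep_sum2 a%:Z (ceildiv s a.-1)%:Z s%:Z a%:Z d%:Z
  - (a%:Z ^+ 2 * (a%:Z - 1) ^+ 2 - a%:Z * (a%:Z - 1) * a%:Z * (2 * a%:Z - 1)
     + a%:Z ^+ 2 * a%:Z * (a%:Z - 1)).
Proof.
transitivity (2 * (6 * a%:Z * powsum (gaps a d s) 2)); first ring.
apply: (powsum_gaps_closed 2 (prim2 a%:Z)
  (fun x => x ^+ 2 * (x - 1) ^+ 2 - a%:Z * (x - 1) * x * (2 * x - 1)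
            + a%:Z ^+ 2 * x * (x - 1))
  (fun n c => least_rep_sum2 n c s%:Z a%:Z d%:Z));
  by move=> *; rewrite /prim2 /least_rep_sum2; ring.
Qed.

End PowerSums.

Theorem mainTheorem6 (a d s : nat) :
  (2 <= a)%N -> (1 <= d)%N -> (1 <= s)%N -> (s < a)%N -> coprime a d ->
  let A : int := a%:Z in let D : int := d%:Z in let S : int := s%:Z in
  let c : int := ceil_c a s in
  exists l : seq nat,
    [/\ uniq l, (forall n : nat, n \in l <-> NR a d s n),
     2 * powsum l 0 = - S * c ^+ 2 + (2 * A - 2 + S) * c + (A - 1) * (D - 1),
     12 * powsum l 1 =
       - 2 * S * (2 * A + D * S) * c ^+ 3
       + (6 * A ^+ 2 + 3 * (2 * A + D * S) * (S - 1)) * c ^+ 2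
       + (6 * (D - 1) * A * (A - 1) + (3 * D - 2 * A - D * S) * S) * c
       + (A - 1) * (D - 1) * (2 * A * D - A - D - 1)
     & 12 * powsum l 2 =
       - S * ((A + S * D) * (2 * A + S * D) + A ^+ 2) * c ^+ 4
       + (4 * A ^+ 3 + 2 * (3 * S - 2) * A ^+ 2 + 2 * S * D * (3 * S - 2) * A
          + 2 * S ^+ 2 * D ^+ 2 * (S - 1)) * c ^+ 3
       + (6 * (D - 1) * A ^+ 3 + 3 * (2 - S - 2 * D) * A ^+ 2
          - 3 * S * D * (S - 2) * A - S * D ^+ 2 * (S ^+ 2 - 3 * S + 1)) * c ^+ 2
       + (2 * (2 * D - 1) * (D - 1) * A ^+ 3 - (6 * D ^+ 2 - 6 * D + 2) * A ^+ 2
          + 2 * D * (D - S) * A + S * (1 - S) * D ^+ 2) * c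
       + A * D * (A - 1) * (D - 1) * (A * D - A - D)].
Proof.
move=> a_ge2 _ s_gt0 _ co_ad /=.
have a_gt0 : (0 < a)%N by apply: ltnW.
have a_neq0 : a%:Z != 0 by rewrite eqz_nat -lt0n.
rewrite /ceil_c ceil_ceildiv //.
exists (gaps a d s); split.
- exact: uniq_gaps.
- by move=> n; apply: NR_gaps.
- by apply: (mulfI a_neq0); rewrite powsum0_gaps // /least_rep_sum0; ring.
- by apply: (mulfI a_neq0); rewrite powsum1_gaps // /least_rep_sum1; ring.
- by apply: (mulfI a_neq0); rewrite powsum2_gaps // /least_rep_sum2; ring.
Qed.
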